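(* There exists a $9\times 9$ bimagic square whose $81$ entries are pairwise distinct strings of length $6$ over $\{0,1,2\}$, each being the concatenation of two $3$-digit palindromes (read as decimal numbers, leading zeros allowed), with magic sum $S1=999999$, and such that each of the nine $3\times3$ blocks has entry sum $999999$.
   Context: A magic square of order $n$ is an $n\times n$ array of numbers in which the sums of the entries of each row, of each column and of each of the two principal diagonals all equal a common value $S1$. It is bimagic if in addition the sums of the squares of the entries of each row, each column and each of the two principal diagonals all equal a common value $S2$. The $3\times3$ blocks are the subarrays with rows $3p+1,\dots,3p+3$ and columns $3q+1,\dots,3q+3$, $p,q\in\{0,1,2\}$. *)

From mathcomp Require Import all_boot.
Set Implicit Arguments. Unset Strict Implicit. Unset Printing Implicit Defensive.

Definition decval (s : seq 'I_3) : nat :=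
  foldl (fun acc (d : 'I_3) => acc * 10 + nat_of_ord d) 0 s.

Definition is_pal (s : seq 'I_3) : bool := rev s == s.

Definition pal_pair (s : 6.-tuple 'I_3) : bool :=
  is_pal (take 3 s) && is_pal (drop 3 s).

Definition is_magic (n : nat) (A : 'I_n -> 'I_n -> nat) (S : nat) : Prop :=
  (forall i : 'I_n, \sum_(j < n) A i j = S) /\
  (forall j : 'I_n, \sum_(i < n) A i j = S) /\
  \sum_(i < n) A i i = S /\
  \sum_(i < n) A i (rev_ord i) = S.

Definition is_bimagic (n : nat) (A : 'I_n -> 'I_n -> nat) (S1 S2 : nat) : Prop :=
  is_magic A S1 /\ is_magic (fun i j => A i j ^ 2) S2.

(** Write the entry of cell (i, j) as the palindromes aba and cdc, where each digit
    a, b, c, d is an affine form modulo 3 in the base-3 coordinates of i and j.  The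
    entry then has value (10^5 + 10^3) a + 10^4 b + (10^2 + 1) c + 10 d, so the sum of
    the entries along a set of cells depends only on the first moments of the digits
    there, and the sum of their squares only on the second moments.  The forms are
    chosen so that along every row, column and diagonal each digit takes every value
    three times and any two digits jointly take every pair of values once, which fixes
    both moments independently of the line; on each block the digits are still
    balanced.  The affine map from coordinates to digits is invertible, so the
    entries are distinct. *)

From mathcomp Require Import all_boot zify zmodp.
Set Implicit Arguments. Unset Strict Implicit. Unset Printing Implicit Defensive.

Section WeightedSums.
Variables (T K : finType) (w : K -> nat) (x : K -> T -> nat).

Lemma sum_weighted :
  \sum_(t : T) \sum_(k : K) w k * x k t = \sum_(k : K) w k * \sum_(t : T) x k t.
Proof. by rewrite exchange_big; apply: eq_bigr => k _; rewrite big_distrr. Qed.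

Lemma sum_weighted_sqr :
  \sum_(t : T) (\sum_(k : K) w k * x k t) ^ 2 =
  \sum_(k : K) \sum_(l : K) w k * w l * \sum_(t : T) x k t * x l t.
Proof.
under eq_bigr do rewrite expnS expn1 big_distrlr.
rewrite exchange_big; apply: eq_bigr => k _.
rewrite exchange_big; apply: eq_bigr => l _.
by rewrite big_distrr; apply: eq_bigr => t _; exact: mulnACA.
Qed.

End WeightedSums.

Definition palindrome_pair (a b c d : 'I_3) : 6.-tuple 'I_3 := [tuple a; b; a; c; d; c].

Lemma pal_pair_palindrome_pair a b c d : pal_pair (palindrome_pair a b c d).
Proof. by rewrite /pal_pair /is_pal /= !eqxx. Qed.

Definition digit_weight (k : nat) : nat := nth 0 [:: 10 ^ 5 + 10 ^ 3; 10 ^ 4; 10 ^ 2 + 1; 10] k.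

Lemma decval_palindrome_pair (x : nat -> 'I_3) :
  decval (palindrome_pair (x 0) (x 1) (x 2) (x 3)) = \sum_(k < 4) digit_weight k * x k.
Proof. by rewrite !big_ord_recr big_ord0 /= /decval /digit_weight /=; lia. Qed.

Lemma sum_digit_weights : \sum_(k < 4) digit_weight k * 9 = 999999.
Proof. by rewrite !big_ord_recr big_ord0; apply/eqP; vm_compute. Qed.

Definition digit (k i j : nat) : 'I_3 :=
  let: (i1, i0, j1, j0) := (i %/ 3, i %% 3, j %/ 3, j %% 3) in
  inZp (nth 0 [:: 2 * i1 + 2 * i0 + j0; i1 + 2 * i0 + 2 * j1;
                  2 * i1 + 2 * j1 + j0 + 1; i0 + j1 + j0] k).

Definition square (i j : 'I_9) : 6.-tuple 'I_3 :=
  palindrome_pair (digit 0 i j) (digit 1 i j) (digit 2 i j) (digit 3 i j).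

(* Inverse of the affine map [digit]; positions 0, 1, 3, 4 of the string hold a, b, c, d. *)
Definition cell_of_string (s : 6.-tuple 'I_3) : 'I_9 * 'I_9 :=
  let x k := nat_of_ord (nth ord0 s k) in
  (inZp (3 * (x 0 + x 3 + x 4 + 2) + (x 1 + x 3 + 2 * x 4 + 2) %% 3),
   inZp (3 * (x 0 + x 1 + 2 * x 4) + (2 * x 0 + x 1 + 2 * x 3 + 1) %% 3)).

Lemma cell_of_squareK (i j : 'I_9) : cell_of_string (square i j) = (i, j).
Proof.
by apply/eqP; case: i => [[|[|[|[|[|[|[|[|[|//]]]]]]]]] ?];
  case: j => [[|[|[|[|[|[|[|[|[|//]]]]]]]]] ?].
Qed.

Definition cell_digit (k : nat) (c : 'I_9 * 'I_9) : nat := digit k c.1 c.2.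

Definition cell_value (c : 'I_9 * 'I_9) : nat := decval (square c.1 c.2).

Lemma cell_value_digits c : cell_value c = \sum_(k < 4) digit_weight k * cell_digit k c.
Proof. exact: (decval_palindrome_pair (fun k => digit k c.1 c.2)). Qed.

(* Second moments of digits that take each value three times (k = l: 3 (0 + 1 + 4))
   and jointly take each pair of values once (k <> l: (0 + 1 + 2)^2). *)
Definition gram (k l : nat) : nat := if k == l then 15 else 9.

Definition bimagic_sum : nat :=
  \sum_(k < 4) \sum_(l < 4) digit_weight k * digit_weight l * gram k l.

Section Lines.
Variables (T : finType) (p : T -> 'I_9 * 'I_9).

Definition moment1 (k : nat) : nat := \sum_(t : T) cell_digit k (p t).

Definition moment2 (k l : nat) : nat := \sum_(t : T) cell_digit k (p t) * cell_digit l (p t).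

Definition balanced : Prop :=
  (forall k : 'I_4, moment1 k = 9) /\ (forall k l : 'I_4, moment2 k l = gram k l).

Lemma sum_cell_value : (forall k : 'I_4, moment1 k = 9) -> \sum_(t : T) cell_value (p t) = 999999.
Proof.
move=> m1; under eq_bigr do rewrite cell_value_digits.
by rewrite sum_weighted; under eq_bigr => k _ do rewrite -/(moment1 k) m1; exact: sum_digit_weights.
Qed.

Lemma sum_cell_value_sqr :
  (forall k l : 'I_4, moment2 k l = gram k l) -> \sum_(t : T) cell_value (p t) ^ 2 = bimagic_sum.
Proof.
move=> m2; under eq_bigr do rewrite cell_value_digits.
rewrite sum_weighted_sqr; apply: eq_bigr => k _; apply: eq_bigr => l _.
by rewrite -/(moment2 k l) m2.
Qed.

End Lines.

Lemma row_balanced (i : 'I_9) : balanced (fun j => (i, j)).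
Proof.
by split=> [k|k l]; rewrite /moment1 /moment2 !big_ord_recr big_ord0 /=;
  case: i => [[|[|[|[|[|[|[|[|[|//]]]]]]]]] ?];
  case: k => [[|[|[|[|//]]]] ?]; try case: l => [[|[|[|[|//]]]] ?].
Qed.

Lemma col_balanced (j : 'I_9) : balanced (fun i => (i, j)).
Proof.
by split=> [k|k l]; rewrite /moment1 /moment2 !big_ord_recr big_ord0 /=;
  case: j => [[|[|[|[|[|[|[|[|[|//]]]]]]]]] ?];
  case: k => [[|[|[|[|//]]]] ?]; try case: l => [[|[|[|[|//]]]] ?].
Qed.

Lemma diag_balanced : balanced (fun i : 'I_9 => (i, i)).
Proof.
by split=> [k|k l]; rewrite /moment1 /moment2 !big_ord_recr big_ord0 /=;
  case: k => [[|[|[|[|//]]]] ?]; try case: l => [[|[|[|[|//]]]] ?].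
Qed.

Lemma antidiag_balanced : balanced (fun i : 'I_9 => (i, rev_ord i)).
Proof.
by split=> [k|k l]; rewrite /moment1 /moment2 !big_ord_recr big_ord0 /=;
  case: k => [[|[|[|[|//]]]] ?]; try case: l => [[|[|[|[|//]]]] ?].
Qed.

Definition block_cell (p q : 'I_3) (rc : 'I_3 * 'I_3) : 'I_9 * 'I_9 :=
  (inord (3 * p + rc.1), inord (3 * q + rc.2)).

Lemma block_moment1 (p q : 'I_3) (k : 'I_4) : moment1 (block_cell p q) k = 9.
Proof.
rewrite /moment1 -(pair_bigA _ (fun r c => cell_digit k (block_cell p q (r, c)))).
rewrite !big_ord_recr !big_ord0 /=.
by case: p => [[|[|[|//]]] ?]; case: q => [[|[|[|//]]] ?]; rewrite /cell_digit /= !inordK //;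
  case: k => [[|[|[|[|//]]]] ?].
Qed.

Lemma square_bimagic : is_bimagic (fun i j => decval (square i j)) 999999 bimagic_sum.
Proof.
split; split; [| split; [| split] | | split; [| split]].
- move=> i; exact: sum_cell_value (row_balanced i).1.
- move=> j; exact: sum_cell_value (col_balanced j).1.
- exact: sum_cell_value diag_balanced.1.
- exact: sum_cell_value antidiag_balanced.1.
- move=> i; exact: sum_cell_value_sqr (row_balanced i).2.
- move=> j; exact: sum_cell_value_sqr (col_balanced j).2.
- exact: sum_cell_value_sqr diag_balanced.2.
- exact: sum_cell_value_sqr antidiag_balanced.2.
Qed.

Theorem mainTheorem5 :
  exists (M : 'I_9 -> 'I_9 -> 6.-tuple 'I_3) (S2 : nat),
    (forall i j i' j' : 'I_9, M i j = M i' j' -> i = i' /\ j = j') /\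
    (forall i j : 'I_9, pal_pair (M i j)) /\
    is_bimagic (fun i j => decval (M i j)) 999999 S2 /\
    (forall p q : 'I_3,
       \sum_(r < 3) \sum_(c < 3)
          decval (M (inord (3 * p + r)) (inord (3 * q + c))) = 999999).
Proof.
exists square, bimagic_sum.
split.
  move=> i j i' j' /(congr1 cell_of_string).
  by rewrite !cell_of_squareK => -[-> ->].
split; first by move=> i j; exact: pal_pair_palindrome_pair.
split; first exact: square_bimagic.
by move=> p q; rewrite pair_bigA; exact: sum_cell_value (block_moment1 p q).
Qed.
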